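(* Let $n$ be an odd positive integer and let $i_1,\dots,i_s$ with $0\le i_1<\dots<i_s\le n-1$ be integers no two of which belong to the same cyclotomic coset modulo $n$. Let $g$ be a positive integer with $(2^g-1)\mid n$. Suppose there exists an integer $r$ with $0<r<2^g-1$ and $\gcd(r,2^g-1)=1$ such that all of $i_1,\dots,i_s$ lie in $\mathcal{C}_r^{(2^g-1)}$, i.e. each $i_t \bmod (2^g-1)$ belongs to $\{r2^k\bmod(2^g-1):k\ge0\}$. Then the binary cyclic code of length $n$ with generator polynomial $\prod_{t=1}^{s}M_{i_t}(x)$ has minimum distance $d\le 3$. If moreover $\gcd(n,i_1,\dots,i_s)=1$, then $d=3$.
   Context: For odd $n$, $\alpha$ denotes a primitive $n$th root of unity in an extension field of $\mathbb{F}_2$. The cyclotomic coset of $r$ modulo $N$ (over $\mathbb{F}_2$) is $\mathcal{C}_r^{(N)}=\{r2^k \bmod N: k=0,1,\dots\}$. $M_i(x)=\prod_{t\in\mathcal{C}_i^{(n)}}(x-\alpha^t)\in\mathbb{F}_2[x]$ is the minimal polynomial of $\alpha^i$. The binary cyclic code with generator polynomial $G(x)\mid x^n-1$ is $\{c(x)\in\mathbb{F}_2[x]/(x^n-1): G(x)\mid c(x)\}$. *)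

From HB Require Import structures.
From mathcomp Require Import all_boot all_order all_algebra.
Set Implicit Arguments. Unset Strict Implicit. Unset Printing Implicit Defensive.
Import GRing.Theory.
Local Open Scope ring_scope.

(* Since the multiplicative order of 2 mod odd N is <= N, it
   suffices to let k range over 0..N-1 (for N >= 1). *)
Definition in_cyc_coset (N r j : nat) : bool :=
  [exists k : 'I_N, ((r * 2 ^ k) %% N == j)%N].

Definition minpoly_i (F : fieldType) (alpha : F) (n i : nat) : {poly F} :=
  \prod_(t < n | in_cyc_coset n i t) ('X - (alpha ^+ t)%:P).

(* A binary word of length n and its polynomial c(x) = sum_j c_j x^j
   (the representative of degree < n in F_2[x]/(x^n-1), viewed in F[x]). *)
Definition word_poly (F : fieldType) (n : nat) (c : {ffun 'I_n -> bool}) : {poly F} :=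
  \sum_(j < n) (nat_of_bool (c j))%:R *: 'X^j.

Definition cyclic_code (F : fieldType) (n : nat) (G : {poly F}) : {set {ffun 'I_n -> bool}} :=
  [set c : {ffun 'I_n -> bool} | G %| word_poly F c].

Definition weight (n : nat) (c : {ffun 'I_n -> bool}) : nat := #|[set j | c j]|.

(* Minimum (Hamming) distance = minimum weight of a nonzero codeword
   (convention: n if the code has no nonzero codeword). *)
Definition min_dist (n : nat) (C : {set {ffun 'I_n -> bool}}) : nat :=
  \big[minn/n]_(c in C | c != [ffun => false]) weight c.

From HB Require Import structures.
From mathcomp Require Import all_boot all_order all_algebra cyclic.

(* Let m = 2^g - 1 and q = n / m.  Then gamma = alpha^(q r) is a primitive m-th
   root of unity, and in characteristic 2 we have (1 + gamma)^(2^g) = 1 + gamma,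
   so 1 + gamma = gamma^w for some 1 < w < m.  Every zero of the generator is
   some alpha^(i_t 2^k), and since i_t = r 2^k' modulo m, its q-th power is a
   conjugate gamma^(2^K).  Hence the weight-3 word 1 + x^q + x^(q w) vanishes
   there, its value being (1 + gamma + gamma^w)^(2^K) = 0.  Conversely, a word
   x^j + x^k vanishing at every alpha^(i_t) forces n | i_t (k - j) for all t,
   so n | k - j when gcd(n, i_1, ..., i_s) = 1; and x^j never vanishes. *)

Set Implicit Arguments.
Unset Strict Implicit.
Unset Printing Implicit Defensive.

Import Order.TTheory GRing.Theory.

Lemma totient_leq n : totient n <= n.
Proof.
rewrite totient_count_coprime -[leqRHS](card_ord n) -sum1_card big_mkord.
by apply: leq_sum => j _; apply: leq_b1.
Qed.

Lemma expn2_mod_totient n k : odd n -> 2 ^ k = 2 ^ (k %% totient n) %[mod n].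
Proof.
move=> n_odd; have cop2n : coprime 2 n by rewrite coprime_sym coprimen2.
rewrite {1}(divn_eq k (totient n)) expnD [_ * totient n]mulnC expnM -modnMml -modnXm.
by rewrite Euler_exp_totient // modnXm exp1n modnMml mul1n.
Qed.

Lemma in_cyc_cosetP N r j :
  odd N -> reflect (exists k, (r * 2 ^ k) %% N = j) (in_cyc_coset N r j).
Proof.
move=> N_odd; apply: (iffP existsP) => [[k /eqP <-]|[k <-]]; first by exists k.
have lt_kN : k %% totient N < N.
  by rewrite (leq_trans _ (totient_leq N)) // ltn_mod totient_gt0 odd_gt0.
by exists (Ordinal lt_kN); rewrite /= -modnMmr -expn2_mod_totient // modnMmr.
Qed.

Lemma in_cyc_coset_refl N j : j < N -> in_cyc_coset N j j.
Proof.
move=> lt_jN; apply/existsP; exists (Ordinal (leq_ltn_trans (leq0n j) lt_jN)).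
by rewrite /= muln1 modn_small.
Qed.

Lemma in_cyc_coset_trans N a b t : odd N -> b < N ->
  in_cyc_coset N a t -> in_cyc_coset N b t -> in_cyc_coset N a b.
Proof.
move=> N_odd lt_bN /(in_cyc_cosetP _ _ N_odd)[k atk] /(in_cyc_cosetP _ _ N_odd)[l btl].
(* 2^(l phi) = 1 mod N, so b = (b 2^l) 2^(l (phi - 1)) = a 2^(k + l (phi - 1)). *)
apply/(in_cyc_cosetP _ _ N_odd); exists (k + l * (totient N).-1).
have phi_gt0 : 0 < totient N by rewrite totient_gt0 odd_gt0.
rewrite -[b in RHS](modn_small lt_bN).
have -> : b = (b * 2 ^ l) * 2 ^ (l * (totient N).-1) %[mod N].
  rewrite -mulnA -expnD -{1}(muln1 l) -mulnDr add1n prednK // -modnMmr.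
  by rewrite expn2_mod_totient // modnMl expn0 modnMmr muln1.
by rewrite -[RHS]modnMml btl -atk modnMml expnD mulnA.
Qed.

Lemma eqn_mod_big_gcdn n s (I : 'I_s -> nat) j k :
  coprime n (\big[gcdn/0]_(a < s) I a) ->
  (forall a, I a * j = I a * k %[mod n]) -> j = k %[mod n].
Proof.
wlog le_jk : j k / j <= k => [wlog_jk cop eqI|].
  by case: (leqP j k) => [|/ltnW] /wlog_jk -> // a; rewrite eqI.
move=> cop eqI; apply/eqP; rewrite eq_sym eqn_mod_dvd // -(Gauss_dvdr _ cop).
elim/big_ind: _ => [|x y|a _]; first by rewrite mul0n dvdn0.
  by rewrite muln_gcdl dvdn_gcd => -> ->.
by rewrite mulnBr -eqn_mod_dvd ?leq_mul2l ?le_jk ?orbT // eqI.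
Qed.

Local Open Scope ring_scope.

Lemma prod_big_disjoint (R : comNzRingType) s n (P : 'I_s -> pred 'I_n)
    (G : 'I_n -> R) :
  (forall a b t, P a t -> P b t -> a = b) ->
  \prod_(a < s) \prod_(t < n | P a t) G t = \prod_(t < n | [exists a, P a t]) G t.
Proof.
move=> P_disj; under eq_bigr do rewrite big_mkcond.
rewrite exchange_big [RHS]big_mkcond; apply: eq_bigr => t _.
case: existsP => [[a Pat]|noPt].
  rewrite (bigD1 a) //= Pat big1 ?mulr1 // => b neq_ba.
  by case: ifP => // Pbt; rewrite (P_disj _ _ _ Pbt Pat) eqxx in neq_ba.
by rewrite big1 // => a _; case: ifP => // Pat; case: noPt; exists a.
Qed.

Lemma prod_XsubC_prim_expr_dvdp (F : fieldType) n (alpha : F) (Q : pred 'I_n)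
    (p : {poly F}) :
  n.-primitive_root alpha -> (forall t : 'I_n, Q t -> root p (alpha ^+ t)) ->
  \prod_(t < n | Q t) ('X - (alpha ^+ t)%:P) %| p.
Proof.
move=> alpha_prim rootQ; set rs := [seq alpha ^+ val t | t <- enum Q].
have rs_roots : all (root p) rs.
  by apply/allP => x /mapP[t]; rewrite mem_enum => Qt ->; apply: rootQ.
have rs_uniq : uniq_roots rs.
  rewrite uniq_rootsE map_inj_in_uniq ?enum_uniq // => t u _ _ /eqP.
  by rewrite (eq_prim_root_expr alpha_prim) !modn_small ?ltn_ord // => /eqP/val_inj.
have [q ->] := uniq_roots_prod_XsubC rs_roots rs_uniq.
by rewrite big_map big_enum dvdp_mulIr.
Qed.

Lemma exp2nD_pchar2 (R : comNzRingType) (x y : R) K :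
  2 \in [pchar R] -> (x + y) ^+ (2 ^ K) = x ^+ (2 ^ K) + y ^+ (2 ^ K).
Proof.
by move=> charR; apply: exprDn_pchar; rewrite pnatX (pnatE _ (isT : prime 2)) charR.
Qed.

(* (1 + z)^(2^g) = 1 + z^(2^g) = 1 + z, so 1 + z is an m-th root of unity. *)
Lemma addr1_prim_root_expr (F : fieldType) g (z : F) :
  2 \in [pchar F] -> (1 < 2 ^ g - 1)%N -> (2 ^ g - 1).-primitive_root z ->
  exists2 w : 'I_(2 ^ g - 1), (1 < w)%N & 1 + z = z ^+ w.
Proof.
move=> charF; set m := (2 ^ g - 1)%N => m_gt1 z_prim.
have m1E : (2 ^ g = m.+1)%N by rewrite /m subn1 prednK ?expn_gt0.
have z_neq0 : z != 0 by rewrite (prim_root_eq0 z_prim) gtn_eqF // ltnW.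
have z1_neq0 : 1 + z != 0.
  rewrite addr_eq0 (oppr_pchar2 charF) eq_sym -[z]expr1 -(prim_order_dvd z_prim).
  by rewrite dvdn1 gtn_eqF.
have z1_unity : (1 + z) ^+ m = 1.
  apply: (mulIf z1_neq0); rewrite mul1r -exprSr -m1E exp2nD_pchar2 // expr1n.
  by rewrite m1E exprS prim_expr_order // mulr1.
have [w z1E] := prim_rootP z_prim z1_unity; exists w => //.
case: w z1E => -[|[|w]] //= _ /eqP; last by rewrite expr1 -subr_eq0 addrK oner_eq0.
by rewrite expr0 -subr_eq0 addrAC subrr add0r (negPf z_neq0).
Qed.

Lemma expr_cyc_coset (R : nzRingType) m (beta : R) r j :
  beta ^+ m = 1 -> in_cyc_coset m r (j %% m) ->
  exists K, beta ^+ j = (beta ^+ r) ^+ (2 ^ K).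
Proof.
move=> beta_m /existsP[k /eqP rkE]; exists k.
by rewrite -exprM -(expr_mod (r * 2 ^ k) beta_m) rkE expr_mod.
Qed.

Lemma horner_word_poly (F : fieldType) n (c : {ffun 'I_n -> bool}) (x : F) :
  (word_poly F c).[x] = \sum_(j in [set j | c j]) x ^+ j.
Proof.
rewrite horner_sum [RHS]big_mkcond; apply: eq_bigr => j _.
by rewrite hornerZ hornerXn inE; case: (c j); rewrite ?scale1r ?mul1r ?mul0r.
Qed.

Lemma weight_eq0 n (c : {ffun 'I_n -> bool}) :
  (weight c == 0%N) = (c == [ffun => false]).
Proof.
rewrite /weight cards_eq0; apply/eqP/eqP => [c0|->]; last first.
  by apply/setP => j; rewrite !inE ffunE.
by apply/ffunP => j; rewrite ffunE; apply/negbTE; rewrite -[c j]inE c0 inE.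
Qed.

Lemma min_dist_leq n (C : {set {ffun 'I_n -> bool}}) c :
  c \in C -> c != [ffun => false] -> (min_dist C <= weight c)%N.
Proof.
by move=> cC c_neq0; apply: (bigmin_le_cond n); rewrite cC.
Qed.

Lemma leq_min_dist n (C : {set {ffun 'I_n -> bool}}) k : (k <= n)%N ->
  (forall c, c \in C -> c != [ffun => false] -> k <= weight c)%N ->
  (k <= min_dist C)%N.
Proof.
move=> k_le_n k_le_wt; rewrite /min_dist.
by apply: (@le_bigmin _ _ _ _ (fun c => weight c)) => // c /andP[]; apply: k_le_wt.
Qed.

Lemma trinomial_word (F : fieldType) n q w :
  (0 < q)%N -> (1 < w)%N -> (q * w < n)%N ->
  exists2 c : {ffun 'I_n -> bool}, weight c = 3%N &
    forall x : F, (word_poly F c).[x] = 1 + x ^+ q + x ^+ (q * w).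
Proof.
move=> q_gt0 w_gt1 qw_lt_n.
have q_lt_qw : (q < q * w)%N by rewrite ltn_Pmulr.
have q_lt_n : (q < n)%N := ltn_trans q_lt_qw qw_lt_n.
have n_gt0 : (0 < n)%N := ltn_trans q_gt0 q_lt_n.
set j0 := Ordinal n_gt0; set jq := Ordinal q_lt_n; set jqw := Ordinal qw_lt_n.
have j0_neq_q : j0 != jq by rewrite -val_eqE /= eq_sym -lt0n.
have j0_neq_qw : j0 != jqw by rewrite -val_eqE /= eq_sym -lt0n (ltn_trans q_gt0).
have jq_neq_qw : jq != jqw by rewrite -val_eqE /= ltn_eqF.
pose A := j0 |: (jq |: [set jqw]).
have suppA : [set j | [ffun j => j \in A] j] = A.
  by apply/setP => j; rewrite inE ffunE.
exists [ffun j => j \in A].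
  rewrite /weight suppA /A !cardsU1 cards1 !inE.
  by rewrite (negPf j0_neq_q) (negPf j0_neq_qw) (negPf jq_neq_qw).
move=> x; rewrite horner_word_poly suppA /A !big_setU1 ?big_set1 /= ?expr0 ?addrA //.
  by rewrite inE.
by rewrite !inE negb_or j0_neq_q.
Qed.

Section BinaryCyclicCode.

Variables (F : fieldType) (n : nat) (alpha : F) (s : nat) (i : 'I_s -> nat).
Hypothesis alpha_prim : n.-primitive_root alpha.
Hypothesis i_lt_n : forall a, (i a < n)%N.

Local Notation code := (cyclic_code n (\prod_(a < s) minpoly_i alpha n (i a))).

Lemma root_code c a : c \in code -> root (word_poly F c) (alpha ^+ i a).
Proof.
rewrite inE -dvdp_XsubCl => /(dvdp_trans _); apply.
rewrite (bigD1 a) // dvdp_mulr // /minpoly_i (bigD1 (Ordinal (i_lt_n a))) /=.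
  by rewrite dvdp_mulIl.
exact: in_cyc_coset_refl.
Qed.

Lemma prod_minpoly_i_dvdp p : odd n ->
    (forall a b, a != b -> ~~ in_cyc_coset n (i a) (i b)) ->
    (forall a k, root p (alpha ^+ (i a * 2 ^ k))) ->
  \prod_(a < s) minpoly_i alpha n (i a) %| p.
Proof.
move=> n_odd i_cosets rootp; rewrite /minpoly_i prod_big_disjoint.
  apply: prod_XsubC_prim_expr_dvdp => // t.
  by case/existsP=> a /(in_cyc_cosetP _ _ n_odd)[k <-]; rewrite prim_expr_mod.
move=> a b t iat ibt; apply/eqP; case: eqVneq => // /i_cosets/negP[].
exact: in_cyc_coset_trans n_odd (i_lt_n b) iat ibt.
Qed.

Lemma code_weight_ge3 c : 2 \in [pchar F] -> (0 < s)%N ->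
    coprime n (\big[gcdn/0%N]_(a < s) i a) ->
  c \in code -> c != [ffun => false] -> (3 <= weight c)%N.
Proof.
move=> charF s_gt0 cop cC c_neq0.
have c_root a : \sum_(j in [set j | c j]) (alpha ^+ i a) ^+ j = 0.
  by rewrite -horner_word_poly; apply/rootP/root_code.
have alpha_neq0 : alpha != 0.
  by rewrite (prim_root_eq0 alpha_prim) -lt0n (prim_order_gt0 alpha_prim).
rewrite /weight ltnNge; apply/negP; rewrite leq_eqVlt ltnS leq_eqVlt ltnS leqn0.
case/or3P => [/cards2P[j [k [neq_jk suppE]]] | /cards1P[j suppE] | supp0].
- have jk_mod : j = k %[mod n].
    apply: (eqn_mod_big_gcdn cop) => a; apply/eqP.
    rewrite -(eq_prim_root_expr alpha_prim) !exprM.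
    move: (c_root a); rewrite suppE big_setU1 ?big_set1 ?inE //= => /eqP.
    by rewrite addr_eq0 (oppr_pchar2 charF).
  move: jk_mod; rewrite !modn_small // => /val_inj eq_jk.
  by rewrite eq_jk eqxx in neq_jk.
- have := c_root (Ordinal s_gt0); rewrite suppE big_set1 => /eqP.
  by rewrite !expf_eq0 (negPf alpha_neq0) !andbF.
- by case/negP: c_neq0; rewrite -weight_eq0.
Qed.

Lemma exists_code_weight3 g r : 2 \in [pchar F] -> odd n ->
    (forall a b, a != b -> ~~ in_cyc_coset n (i a) (i b)) ->
    (2 ^ g - 1 %| n)%N -> (0 < r)%N -> (r < 2 ^ g - 1)%N ->
    coprime r (2 ^ g - 1) ->
    (forall a, in_cyc_coset (2 ^ g - 1) r (i a %% (2 ^ g - 1))) ->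
  exists2 c, c \in code & weight c = 3%N.
Proof.
move=> charF n_odd i_cosets m_dvd_n r_gt0 r_lt_m r_cop i_in_r.
have m_gt1 : (1 < 2 ^ g - 1)%N := leq_ltn_trans r_gt0 r_lt_m.
set m := (2 ^ g - 1)%N in m_dvd_n r_lt_m r_cop i_in_r m_gt1.
set q := (n %/ m)%N.
have q_gt0 : (0 < q)%N by rewrite divn_gt0 ?(ltnW m_gt1) // (dvdn_leq (odd_gt0 n_odd)).
have beta_prim : m.-primitive_root (alpha ^+ q) := dvdn_prim_root alpha_prim m_dvd_n.
pose gamma := alpha ^+ q ^+ r.
have gamma_prim : m.-primitive_root gamma by rewrite prim_root_exp_coprime.
have [w w_gt1 gammaE] := addr1_prim_root_expr charF m_gt1 gamma_prim.
have qw_lt_n : (q * w < n)%N by rewrite -[ltnRHS](divnK m_dvd_n) ltn_pmul2l.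
have [c wt_c c_horner] := trinomial_word F q_gt0 w_gt1 qw_lt_n.
exists c => //; rewrite inE; apply: prod_minpoly_i_dvdp => // a k.
have [K betaE] := expr_cyc_coset (prim_expr_order beta_prim) (i_in_r a).
have xqE : (alpha ^+ (i a * 2 ^ k)) ^+ q = gamma ^+ (2 ^ (K + k)).
  by rewrite -exprM mulnC exprM exprM betaE expnD exprM.
rewrite /root c_horner [_ ^+ (q * w)]exprM xqE exprAC -[1](expr1n _ (2 ^ (K + k))).
by rewrite -!exp2nD_pchar2 // -gammaE addrr_pchar2 // expr0n expn_eq0.
Qed.

End BinaryCyclicCode.

Theorem theorem4 (F : fieldType) (charF : (2 \in [pchar F])%N)
  (n : nat) (alpha : F) (n_odd : odd n) (n_pos : (0 < n)%N)
  (alpha_prim : n.-primitive_root alpha)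
  (s : nat) (s_pos : (0 < s)%N) (i : 'I_s -> nat)
  (i_lt_n : forall a, (i a < n)%N)
  (i_incr : forall a b : 'I_s, (a < b)%N -> (i a < i b)%N)
  (i_cosets : forall a b : 'I_s, a != b -> ~~ in_cyc_coset n (i a) (i b))
  (g : nat) (g_pos : (0 < g)%N) (g_div : (2 ^ g - 1 %| n)%N)
  (r : nat) (r_pos : (0 < r)%N) (r_lt : (r < 2 ^ g - 1)%N)
  (r_cop : coprime r (2 ^ g - 1))
  (i_in_r : forall a, in_cyc_coset (2 ^ g - 1) r (i a %% (2 ^ g - 1))) :
  let C := cyclic_code n (\prod_(a < s) minpoly_i alpha n (i a)) in
  (min_dist C <= 3)%N /\
  (gcdn n (\big[gcdn/0%N]_(a < s) i a) = 1%N -> min_dist C = 3%N).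
Proof.
move=> C.
have [c cC wt_c] := exists_code_weight3 alpha_prim i_lt_n charF n_odd i_cosets
  g_div r_pos r_lt r_cop i_in_r.
have c_neq0 : c != [ffun => false] by rewrite -weight_eq0 wt_c.
have d_le3 : (min_dist C <= 3)%N by rewrite -wt_c min_dist_leq.
split=> // gcd1; apply/eqP; rewrite eqn_leq d_le3 leq_min_dist //.
  by rewrite -wt_c (leq_trans (max_card _)) ?card_ord.
by move=> d; apply: code_weight_ge3; rewrite // /coprime gcd1.
Qed.
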